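(* The functor $\sigma:\mathcal{T}_q\to\mathcal{S}_q$ is full: for every morphism $S=[V\xleftarrow{f}D\xrightarrow{g}W]$ of $\mathcal{S}_q$ there is $T\in\mathrm{Hom}_{\mathcal{T}_q}(V,W)$ with $\sigma(T)=S$.
   Context: All vector spaces over $\mathbb{F}_2$. $\mathcal{E}_q^{deg}$: objects finite-dimensional quadratic spaces (possibly degenerate), morphisms injective linear maps preserving quadratic forms; pullbacks are intersections of images with restricted form. $\mathrm{Sp}(\mathcal{E}_q^{deg})$: morphisms spans $[V\leftarrow D\rightarrow W]$ up to iso of $D$, composed by pullback; $\mathcal{S}_q$ is its full subcategory on non-degenerate spaces (polar form $q(x+y)+q(x)+q(y)$ with trivial radical). $\mathcal{E}_q$: full subcategory of $\mathcal{E}_q^{deg}$ on non-degenerate spaces. Pseudo push-out of $f:V\to W=f(V)\perp V'$ and $g:V\to X=g(V)\perp V''$: $V\perp V'\perp V''$ with maps $f(v)+v'\mapsto v+v'$, $g(v)+v''\mapsto v+v''$. $\mathcal{T}_q$: objects of $\mathcal{E}_q$; morphisms classes of cospans $[V\to X\leftarrow W]$ in $\mathcal{E}_q$ modulo the equivalence relation generated by existence of an $\mathcal{E}_q$-morphism between middle objects compatible with the legs; composition by pseudo push-out. $\sigma$ is the identity on objects and sends $[V\to X\leftarrow W]$ to $[V\leftarrow V\times_X W\rightarrow W]$. *)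

(* Quadratic spaces over F_2 in coordinates: a space of
   dimension n is 'rV['F_2]_n, linear maps are matrices acting on the right
   (x |-> x *m M). *)
From HB Require Import structures.
From mathcomp Require Import all_boot all_order all_algebra.
Set Implicit Arguments. Unset Strict Implicit. Unset Printing Implicit Defensive.
Import GRing.Theory.
Local Open Scope ring_scope.

Definition polar (n : nat) (q : 'rV['F_2]_n -> 'F_2) (x y : 'rV['F_2]_n) : 'F_2 :=
  q (x + y) + q x + q y.

(* q is a quadratic form: q(c x) = c^2 q(x) and its polar form is bilinear
   (it is symmetric by definition, so additivity in the first argument suffices). *)
Definition is_qform (n : nat) (q : 'rV['F_2]_n -> 'F_2) : Prop :=
  (forall (c : 'F_2) x, q (c *: x) = c ^+ 2 * q x) /\
  (forall x x' y, polar q (x + x') y = polar q x y + polar q x' y) /\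
  (forall (c : 'F_2) x y, polar q (c *: x) y = c * polar q x y).

Record qspace := QSpace {
  qdim : nat;
  qform : 'rV['F_2]_qdim -> 'F_2;
  qformP : is_qform qform }.
Arguments qform : clear implicits.

Definition nondeg (V : qspace) : Prop :=
  forall x, (forall y, polar (qform V) x y = 0) -> x = 0.

Definition qmor (V W : qspace) (M : 'M['F_2]_(qdim V, qdim W)) : Prop :=
  row_free M /\ forall x, qform W (x *m M) = qform V x.

(* The pullback V x_X W of a cospan V -a-> X <-b- W : the intersection of the
   images of a and b (given by a basis, the rows of pb_base), with the form
   restricted from X, and its legs to V and W (inverse images). *)
Definition pb_dim (n m k : nat) (a : 'M['F_2]_(n, k)) (b : 'M['F_2]_(m, k)) : nat :=
  \rank (a :&: b)%MS.
Definition pb_base (n m k : nat) (a : 'M['F_2]_(n, k)) (b : 'M['F_2]_(m, k))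
  : 'M['F_2]_(pb_dim a b, k) := row_base (a :&: b)%MS.
Definition pb_form (X : qspace) (n m : nat) (a : 'M['F_2]_(n, qdim X))
  (b : 'M['F_2]_(m, qdim X)) : 'rV['F_2]_(pb_dim a b) -> 'F_2 :=
  fun y => qform X (y *m pb_base a b).
Definition pb_left (n m k : nat) (a : 'M['F_2]_(n, k)) (b : 'M['F_2]_(m, k))
  : 'M['F_2]_(pb_dim a b, n) := pb_base a b *m pinvmx a.
Definition pb_right (n m k : nat) (a : 'M['F_2]_(n, k)) (b : 'M['F_2]_(m, k))
  : 'M['F_2]_(pb_dim a b, m) := pb_base a b *m pinvmx b.

(* Isomorphism of spans [V <-f- D -g-> W] and [V <-p1- P -p2-> W], where P is
   given by its dimension r and form qP: a bijective form-preserving linear map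
   h : D -> P commuting with the legs. *)
Definition span_iso (D : qspace) (n m : nat)
  (f : 'M['F_2]_(qdim D, n)) (g : 'M['F_2]_(qdim D, m))
  (r : nat) (qP : 'rV['F_2]_r -> 'F_2) (p1 : 'M['F_2]_(r, n)) (p2 : 'M['F_2]_(r, m))
  : Prop :=
  exists h : 'M['F_2]_(qdim D, r),
    [/\ row_free h, row_full h, (forall y, qP (y *m h) = qform D y),
        h *m p1 = f & h *m p2 = g].

(* sigma([V -a-> X <-b- W]) is isomorphic (as a span) to [V <-f- D -g-> W] *)
Definition sigma_is (V W X : qspace) (a : 'M['F_2]_(qdim V, qdim X))
  (b : 'M['F_2]_(qdim W, qdim X)) (D : qspace)
  (f : 'M['F_2]_(qdim D, qdim V)) (g : 'M['F_2]_(qdim D, qdim W)) : Prop :=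
  span_iso f g (@pb_form X _ _ a b) (pb_left a b) (pb_right a b).

From mathcomp Require Import all_boot all_order all_algebra ring.
Set Implicit Arguments. Unset Strict Implicit. Unset Printing Implicit Defensive.
Import GRing.Theory.
Local Open Scope ring_scope.

(* Write f^+ for the pseudo-inverse of f (a left inverse, f being injective),
   Q := g^+ f and P := f^+ f, a projection of V onto the image of f.  On W + V
   put the form  q0(w, u) = q_W(w) + q_V(wQ) + q_V(wQ + u),  which is
   q_W(w) + q_V(u) + b_V(wQ, u), and the legs  v |-> (v f^+ g, v - vP)  and
   w |-> (w, 0).  Since q_W(v f^+ g) = q_D(v f^+) = q_V(vP), both legs are
   isometries; the square with f and g commutes, and v f^+ g = w, v = vP says
   exactly that v lies in the image of f, so the pullback of the legs is D.
   The space (W + V, q0) may be degenerate, but it embeds isometrically into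
   the non-degenerate hyperbolic space (y, eta) |-> q0(y) + <y, eta>, and an
   injective map does not change the pullback. *)

Lemma addrr_F2 (x : 'F_2) : x + x = 0.
Proof. exact: (addrr_pchar2 (pchar_Fp (isT : prime 2))). Qed.

Section PolarForm.
Variables (n : nat) (q : 'rV['F_2]_n -> 'F_2).
Hypothesis qq : is_qform q.

Lemma polarC x y : polar q x y = polar q y x.
Proof. rewrite /polar [y + x]addrC; ring. Qed.

Lemma polar0l y : polar q 0 y = 0.
Proof. by case: qq => _ [_ polarZ]; rewrite -(scale0r 0) polarZ mul0r. Qed.

Lemma polar0r y : polar q y 0 = 0.
Proof. by rewrite polarC polar0l. Qed.

End PolarForm.

Lemma polar_add n (q1 q2 : 'rV['F_2]_n -> 'F_2) x y :
  polar (fun z => q1 z + q2 z) x y = polar q1 x y + polar q2 x y.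
Proof. rewrite /polar; ring. Qed.

Lemma polar_comp k l (q : 'rV['F_2]_l -> 'F_2) (L : {linear 'rV_k -> 'rV_l}) x y :
  polar (fun z => q (L z)) x y = polar q (L x) (L y).
Proof. by rewrite /polar linearD. Qed.

Lemma qform_add n (q1 q2 : 'rV['F_2]_n -> 'F_2) :
  is_qform q1 -> is_qform q2 -> is_qform (fun z => q1 z + q2 z).
Proof.
move=> [Z1 [D1 P1]] [Z2 [D2 P2]]; split; [|split] => *; rewrite ?polar_add.
- by rewrite Z1 Z2 mulrDr.
- by rewrite D1 D2; ring.
- by rewrite P1 P2 -mulrDr.
Qed.

Lemma qform_comp k l (q : 'rV['F_2]_l -> 'F_2) (L : {linear 'rV_k -> 'rV_l}) :
  is_qform q -> is_qform (fun z => q (L z)).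
Proof.
move=> [Z [D P]]; split; [|split].
- by move=> c x; rewrite linearZ /= Z.
- by move=> x x' y; rewrite !polar_comp linearD D.
- by move=> c x y; rewrite !polar_comp linearZ /= P.
Qed.

Section DotProduct.
Variables (R : comNzRingType) (n : nat).
Implicit Types x y : 'rV[R]_n.

Definition dotv x y : R := (x *m y^T) 0 0.

Lemma dotvC x y : dotv x y = dotv y x.
Proof. by rewrite /dotv -[y *m x^T]trmxK trmx_mul !trmxK [RHS]mxE. Qed.

Lemma dotvDl x x' y : dotv (x + x') y = dotv x y + dotv x' y.
Proof. by rewrite /dotv mulmxDl mxE. Qed.
Lemma dotvDr x y y' : dotv x (y + y') = dotv x y + dotv x y'.
Proof. by rewrite /dotv linearD mulmxDr mxE. Qed.
Lemma dotvZl c x y : dotv (c *: x) y = c * dotv x y.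
Proof. by rewrite /dotv -scalemxAl mxE. Qed.
Lemma dotvZr c x y : dotv x (c *: y) = c * dotv x y.
Proof. by rewrite /dotv linearZ -scalemxAr mxE. Qed.
Lemma dotv0l y : dotv 0 y = 0.
Proof. by rewrite /dotv mul0mx mxE. Qed.
Lemma dotv0r x : dotv x 0 = 0.
Proof. by rewrite /dotv linear0 mulmx0 mxE. Qed.

Lemma dotv_delta x i : dotv x (delta_mx 0 i) = x 0 i.
Proof. by rewrite /dotv trmx_delta -colE mxE. Qed.

Lemma dotv_nondeg x : (forall y, dotv x y = 0) -> x = 0.
Proof. by move=> x0; apply/rowP => i; rewrite -dotv_delta x0 mxE. Qed.

End DotProduct.

Definition hyp_pair k (z : 'rV['F_2]_(k + k)) : 'F_2 := dotv (lsubmx z) (rsubmx z).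

Lemma polar_hyp_pair k (z y : 'rV['F_2]_(k + k)) :
  polar (@hyp_pair k) z y = dotv (lsubmx z) (rsubmx y) + dotv (lsubmx y) (rsubmx z).
Proof.
rewrite /polar /hyp_pair !linearD /= dotvDl !dotvDr.
move: (dotv _ _) (dotv _ _) (dotv _ _) (dotv _ _) => a b c d.
have -> : d + c + (b + a) + d + a = c + b + (a + a) + (d + d) by ring.
by rewrite !addrr_F2 !addr0.
Qed.

Lemma hyp_pair_qform k : is_qform (@hyp_pair k).
Proof.
split; [|split].
- by move=> c z; rewrite /hyp_pair !linearZ /= dotvZl dotvZr mulrA expr2.
- by move=> z z' y; rewrite !polar_hyp_pair !linearD /= dotvDl dotvDr; ring.
- by move=> c z y; rewrite !polar_hyp_pair !linearZ /= dotvZl dotvZr; ring.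
Qed.

Section Hyperbolic.
Variable Y : qspace.
Local Notation k := (qdim Y).

Definition hyp_form (z : 'rV['F_2]_(k + k)) : 'F_2 := qform Y (lsubmx z) + hyp_pair z.

Lemma hyp_form_qform : is_qform hyp_form.
Proof. exact: qform_add (qform_comp lsubmx (qformP Y)) (@hyp_pair_qform k). Qed.

Definition hyperbolic : qspace := QSpace hyp_form_qform.

Lemma hyperbolic_nondeg : nondeg hyperbolic.
Proof.
move=> z /= z_rad.
have polarE y : polar hyp_form z y = polar (qform Y) (lsubmx z) (lsubmx y)
    + (dotv (lsubmx z) (rsubmx y) + dotv (lsubmx y) (rsubmx z)).
  by rewrite polar_add (polar_comp _ lsubmx) polar_hyp_pair.
have z_l : lsubmx z = 0.
  apply: dotv_nondeg => y; have := z_rad (row_mx 0 y).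
  by rewrite polarE row_mxKl row_mxKr (polar0r (qformP Y)) dotv0l addr0 add0r.
have z_r : rsubmx z = 0.
  apply: dotv_nondeg => y; have := z_rad (row_mx y 0).
  by rewrite polarE z_l row_mxKl (polar0l (qformP Y)) dotv0l !add0r dotvC.
by rewrite -[z]hsubmxK z_l z_r row_mx0.
Qed.

Definition hyp_embed : 'M['F_2]_(k, k + k) := row_mx 1%:M 0.

Lemma hyp_embed_qmor : qmor (W := hyperbolic) hyp_embed.
Proof.
split; first by rewrite /row_free rank_row_mx0 mxrank1.
move=> x; rewrite /= /hyp_form /hyp_pair mul_mx_row mulmx1 mulmx0 row_mxKl row_mxKr.
by rewrite dotv0r addr0.
Qed.

End Hyperbolic.

Lemma qmor_comp (U V W : qspace) (a : 'M_(qdim U, qdim V)) (b : 'M_(qdim V, qdim W)) :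
  qmor a -> qmor b -> qmor (a *m b).
Proof.
move=> [a_free a_q] [b_free b_q]; split; first by rewrite /row_free mxrankMfree.
by move=> x; rewrite mulmxA b_q a_q.
Qed.

Lemma capmx_mulr_free (F : fieldType) m1 m2 n p (A : 'M[F]_(m1, n)) (B : 'M_(m2, n)) (C : 'M_(n, p)) :
  row_free C -> (A *m C :&: B *m C :=: (A :&: B) *m C)%MS.
Proof.
move=> C_free; apply/eqmxP; rewrite capmxMr andbT.
have /submxP[X EX] := capmxSl (A *m C) (B *m C).
have /submxP[Y EY] := capmxSr (A *m C) (B *m C).
have XY : X *m A = Y *m B by apply: (row_free_inj C_free); rewrite -!mulmxA -EX -EY.
by rewrite {1}EX mulmxA submxMr // sub_capmx submxMl XY submxMl.
Qed.

Lemma sigma_is_pullback (V W X D : qspace) (a : 'M_(qdim V, qdim X))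
    (b : 'M_(qdim W, qdim X)) (f : 'M_(qdim D, qdim V)) (g : 'M_(qdim D, qdim W)) :
  qmor f -> qmor a -> row_free b ->
  f *m a = g *m b -> (f *m a :=: a :&: b)%MS -> sigma_is a b f g.
Proof.
move=> [f_free f_q] [a_free a_q] b_free fa_gb fa_cap.
have fa_base : (f *m a <= pb_base a b)%MS by rewrite /pb_base eq_row_base -fa_cap.
pose h := f *m a *m pinvmx (pb_base a b).
have hE : h *m pb_base a b = f *m a by rewrite mulmxKpV.
have fa_rank : \rank (f *m a) = qdim D by rewrite mxrankMfree //; apply/eqP.
have h_rank : \rank h = qdim D.
  apply/eqP; rewrite eqn_leq rank_leq_row -{1}fa_rank -hE.
  exact: mxrankM_maxl.
have dimE : pb_dim a b = qdim D by rewrite /pb_dim -fa_cap fa_rank.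
exists h; split.
- by rewrite /row_free h_rank.
- by rewrite /row_full h_rank dimE.
- by move=> y; rewrite /pb_form -mulmxA hE mulmxA a_q f_q.
- by rewrite /pb_left mulmxA hE mulmxKp.
- by rewrite /pb_right mulmxA hE fa_gb mulmxKp.
Qed.

Section SpanToCospan.
Variables (V W D : qspace) (f : 'M['F_2]_(qdim D, qdim V)) (g : 'M['F_2]_(qdim D, qdim W)).
Hypotheses (hf : qmor f) (hg : qmor g).
Local Notation n := (qdim V).
Local Notation m := (qdim W).

Definition cospan_form (z : 'rV['F_2]_(m + n)) : 'F_2 :=
  qform W (lsubmx z) + qform V (lsubmx z *m (pinvmx g *m f))
  + qform V (lsubmx z *m (pinvmx g *m f) + rsubmx z).

Lemma cospan_form_qform : is_qform cospan_form.
Proof.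
have qV := qformP V; pose Q := pinvmx g *m f.
apply: qform_add; first apply: qform_add.
- exact: qform_comp lsubmx (qformP W).
- exact: qform_comp (mulmxr Q \o lsubmx) qV.
- exact: qform_comp ((mulmxr Q \o lsubmx) \+ rsubmx) qV.
Qed.

Definition cospan_space : qspace := QSpace cospan_form_qform.

Definition cospan_legV : 'M['F_2]_(n, m + n) :=
  row_mx (pinvmx f *m g) (1%:M - pinvmx f *m f).
Definition cospan_legW : 'M['F_2]_(m, m + n) := row_mx 1%:M 0.

Lemma cospan_legV_qmor : qmor (W := cospan_space) cospan_legV.
Proof.
have [f_free f_q] := hf; have [g_free g_q] := hg.
split.
  apply/inj_row_free => x; rewrite mul_mx_row -row_mx0 => /eq_row_mx[xg0 xP0].
  have xf0 : x *m pinvmx f = 0 by apply: (row_free_inj g_free); rewrite mul0mx -mulmxA.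
  by move: xP0; rewrite mulmxBr mulmx1 mulmxA xf0 mul0mx subr0.
move=> x; rewrite /= /cospan_form mul_mx_row row_mxKl row_mxKr.
have xQ : x *m (pinvmx f *m g) *m (pinvmx g *m f) = x *m pinvmx f *m f.
  by rewrite (mulmxA x) (mulmxA _ (pinvmx g)) -(mulmxA _ g) mulmxVp // mulmx1.
rewrite xQ mulmxBr mulmx1 (mulmxA x _ f) subrKC (mulmxA x _ g) g_q -f_q.
by rewrite addrr_F2 add0r.
Qed.

Lemma cospan_legW_qmor : qmor (W := cospan_space) cospan_legW.
Proof.
split; first by rewrite /row_free rank_row_mx0 mxrank1.
move=> x; rewrite /= /cospan_form mul_mx_row mulmx1 mulmx0 row_mxKl row_mxKr addr0.
by rewrite -addrA addrr_F2 addr0.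
Qed.

Lemma cospan_square : f *m cospan_legV = g *m cospan_legW.
Proof.
have f_inv : f *m pinvmx f = 1%:M by apply: mulmxVp; case: hf.
by rewrite !mul_mx_row mulmxBr mulmx1 !(mulmxA f (pinvmx f)) f_inv !mul1mx mulmx1 mulmx0 subrr.
Qed.

Lemma cospan_pullback : (f *m cospan_legV :=: cospan_legV :&: cospan_legW)%MS.
Proof.
apply/eqmxP; rewrite sub_capmx submxMl {1}cospan_square submxMl /=.
have /submxP[X EX] := capmxSl cospan_legV cospan_legW.
have /submxP[Y EY] := capmxSr cospan_legV cospan_legW.
have XP : X = X *m pinvmx f *m f.
  have /(congr1 rsubmx) := etrans (esym EX) EY.
  rewrite !mul_mx_row !row_mxKr mulmx0 mulmxBr mulmx1 mulmxA.
  by move/subr0_eq.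
by rewrite EX XP -(mulmxA _ f) submxMl.
Qed.

End SpanToCospan.

Theorem proposition4p20 (V W D : qspace)
  (f : 'M['F_2]_(qdim D, qdim V)) (g : 'M['F_2]_(qdim D, qdim W)) :
  nondeg V -> nondeg W -> qmor f -> qmor g ->
  exists X : qspace, nondeg X /\
    exists (a : 'M['F_2]_(qdim V, qdim X)) (b : 'M['F_2]_(qdim W, qdim X)),
      [/\ qmor a, qmor b & sigma_is a b f g].
Proof.
move=> _ _ hf hg; set Y := cospan_space f g.
exists (hyperbolic Y); split; first exact: hyperbolic_nondeg.
have e_qmor := hyp_embed_qmor Y.
have a_qmor := qmor_comp (cospan_legV_qmor hf hg) e_qmor.
have b_qmor := qmor_comp (cospan_legW_qmor f g) e_qmor.
exists (cospan_legV f g *m hyp_embed Y), (cospan_legW V W *m hyp_embed Y).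
split=> //; apply: (sigma_is_pullback hf a_qmor b_qmor.1).
- by rewrite (mulmxA f) (mulmxA g) (cospan_square g hf).
- apply: eqmx_trans (eqmx_sym (capmx_mulr_free _ _ e_qmor.1)).
  by rewrite mulmxA; exact: eqmxMr (cospan_pullback g hf).
Qed.
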